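(* Let $\mathfrak{U}$ be an operator ideal on $\mathcal{H}$ as in the context, and let $T\in\mathfrak{U}$. Then: (1) $T$ is approximately right invertible in $\mathfrak{U}$ if and only if $T(\mathcal{H})$ is dense in $\mathcal{H}$; (2) $T$ is approximately left invertible in $\mathfrak{U}$ if and only if $\ker T=\{0\}$.
   Context: $\mathcal{H}$ is an infinite-dimensional separable complex Hilbert space, $\mathcal{B}(\mathcal{H})$ the bounded operators with operator norm $\|\cdot\|$, $\mathfrak{F}(\mathcal{H})$ the finite-rank operators and $\mathcal{K}(\mathcal{H})$ the compact operators. For $f,g\in\mathcal{H}$, $(f\otimes g)(h)=\langle h,g\rangle f$. The $n$-th approximation number of $S\in\mathcal{B}(\mathcal{H})$ is $a_n(S)=\inf\{\|S-F\|:\mathrm{rank}(F)<n\}$. An operator ideal is a linear subspace $\mathfrak{U}\subseteq\mathcal{B}(\mathcal{H})$ such that $S\in\mathcal{B}(\mathcal{H})$, $T\in\mathfrak{U}$ and $a_n(S)\le a_n(T)$ for all $n$ imply $S\in\mathfrak{U}$. Standing assumptions: $\mathfrak{F}(\mathcal{H})\subseteq\mathfrak{U}\subseteq\mathcal{K}(\mathcal{H})$; $\mathfrak{U}$ carries a norm $\|\cdot\|_{\mathfrak{U}}$ satisfying $\|ATB\|_{\mathfrak{U}}\le\|A\|\,\|T\|_{\mathfrak{U}}\,\|B\|$ for $A,B\in\mathcal{B}(\mathcal{H})$, $T\in\mathfrak{U}$, and $\|T^*\|_{\mathfrak{U}}=\|T\|_{\mathfrak{U}}$ for $T\in\mathfrak{U}$;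 $\mathfrak{U}$ is complete in this norm; $\mathfrak{F}(\mathcal{H})$ is $\|\cdot\|_{\mathfrak{U}}$-dense in $\mathfrak{U}$; and $\|f\otimes g\|_{\mathfrak{U}}=\|f\|\,\|g\|$ for all $f,g\in\mathcal{H}$. An approximate identity in $\mathfrak{U}$ is a net $(S_j)$ in $\mathfrak{U}$ with $\|S_jA-A\|_{\mathfrak{U}}\to0$ and $\|AS_j-A\|_{\mathfrak{U}}\to0$ for all $A\in\mathfrak{U}$. $T$ is approximately right (resp. left) invertible in $\mathfrak{U}$ if there is a net $(R_j)$ (resp. $(L_j)$) in $\mathfrak{U}$ such that $(TR_j)$ (resp. $(L_jT)$) is an approximate identity in $\mathfrak{U}$. *)

From mathcomp Require Import all_boot all_order all_algebra.
From mathcomp Require Import all_classical all_reals.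
From mathcomp Require Import complex.
Set Implicit Arguments.
Unset Strict Implicit.
Unset Printing Implicit Defensive.
Import Order.TTheory GRing.Theory Num.Theory.
Local Open Scope ring_scope.
Local Open Scope classical_set_scope.

Section OperatorIdeals.
Variable R : realType.
Variable H : lmodType R[i].
Variable ip : H -> H -> R[i].

Definition is_inner_product : Prop :=
  [/\ (forall (a : R[i]) (x y z : H), ip (a *: x + y) z = a * ip x z + ip y z),
      (forall x y : H, ip y x = (ip x y)^*),
      (forall x : H, 0 <= ip x x) &
      (forall x : H, ip x x = 0 -> x = 0)].

Definition hnorm (x : H) : R := Num.sqrt (complex.Re (ip x x)).

Definition cauchy_seq (u : nat -> H) : Prop :=
  forall eps : R, 0 < eps -> exists N : nat,
    forall m n : nat, (N <= m)%N -> (N <= n)%N -> hnorm (u m - u n) < eps.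

Definition seq_converges_to (u : nat -> H) (l : H) : Prop :=
  forall eps : R, 0 < eps -> exists N : nat,
    forall n : nat, (N <= n)%N -> hnorm (u n - l) < eps.

Definition lin_independent (n : nat) (v : 'I_n -> H) : Prop :=
  forall c : 'I_n -> R[i], \sum_(i < n) c i *: v i = 0 -> forall i, c i = 0.

Definition is_inf_dim_separable_hilbert : Prop :=
  [/\ is_inner_product,
      (forall u : nat -> H, cauchy_seq u -> exists l, seq_converges_to u l),
      (exists e : nat -> H, forall (x : H) (eps : R), 0 < eps ->
          exists n : nat, hnorm (x - e n) < eps) &
      (forall n : nat, exists v : 'I_n -> H, lin_independent v)].

Definition linear_op (T : H -> H) : Prop :=
  forall (a : R[i]) (x y : H), T (a *: x + y) = a *: T x + T y.

Definition bounded_op (T : H -> H) : Prop :=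
  linear_op T /\ exists M : R, forall x : H, hnorm (T x) <= M * hnorm x.

Definition opnorm (T : H -> H) : R :=
  sup [set hnorm (T x) | x in [set x : H | hnorm x <= 1]].

Definition rank_lt (F : H -> H) (n : nat) : Prop :=
  exists (k : nat) (v : 'I_k -> H), (k < n)%N /\
    forall x : H, exists c : 'I_k -> R[i], F x = \sum_(i < k) c i *: v i.

Definition finite_rank (F : H -> H) : Prop :=
  bounded_op F /\ exists n : nat, rank_lt F n.

Definition compact_op (T : H -> H) : Prop :=
  bounded_op T /\
  forall u : nat -> H, (exists M : R, forall n, hnorm (u n) <= M) ->
    exists (phi : nat -> nat) (l : H),
      (forall n, (phi n < phi n.+1)%N) /\ seq_converges_to (fun n => T (u (phi n))) l.

Definition approx_number (S : H -> H) (n : nat) : R :=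
  inf [set opnorm (fun x => S x - F x) | F in [set F : H -> H | bounded_op F /\ rank_lt F n]].

Definition tensor (f g : H) : H -> H := fun h => ip h g *: f.

Definition is_adjoint (T S : H -> H) : Prop :=
  forall x y : H, ip (T x) y = ip x (S y).

Definition is_normed_operator_ideal (U : set (H -> H)) (nU : (H -> H) -> R) : Prop :=
  ((forall T, U T -> bounded_op T) /\
   U (fun _ => 0) /\
   (forall S T, U S -> U T -> U (fun x => S x + T x)) /\
   (forall (a : R[i]) T, U T -> U (fun x => a *: T x))) /\
  (forall S T, bounded_op S -> U T ->
      (forall n : nat, (0 < n)%N -> approx_number S n <= approx_number T n) -> U S) /\
  (forall F, finite_rank F -> U F) /\
  (forall T, U T -> compact_op T) /\
  ((forall T, U T -> 0 <= nU T) /\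
   (forall T, U T -> nU T = 0 -> T = (fun _ => 0)) /\
   (forall S T, U S -> U T -> nU (fun x => S x + T x) <= nU S + nU T) /\
   (forall (a : R[i]) T, U T -> nU (fun x => a *: T x) = complex.Re `|a| * nU T)) /\
  (forall A T B, bounded_op A -> U T -> bounded_op B ->
      nU (fun x => A (T (B x))) <= opnorm A * nU T * opnorm B) /\
  (forall T S, U T -> is_adjoint T S -> nU S = nU T) /\
  (forall u : nat -> (H -> H), (forall n, U (u n)) ->
      (forall eps : R, 0 < eps -> exists N : nat, forall m n : nat,
          (N <= m)%N -> (N <= n)%N -> nU (fun x => u m x - u n x) < eps) ->
      exists T, U T /\ forall eps : R, 0 < eps -> exists N : nat, forall n : nat,
          (N <= n)%N -> nU (fun x => u n x - T x) < eps) /\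
  (forall T, U T -> forall eps : R, 0 < eps ->
      exists F, finite_rank F /\ nU (fun x => T x - F x) < eps) /\
  (forall f g : H, nU (tensor f g) = hnorm f * hnorm g).

Definition directed (I : Type) (le : I -> I -> Prop) : Prop :=
  [/\ inhabited I, (forall i, le i i),
      (forall i j k, le i j -> le j k -> le i k) &
      (forall i j, exists k, le i k /\ le j k)].

Definition approx_identity (U : set (H -> H)) (nU : (H -> H) -> R)
    (I : Type) (le : I -> I -> Prop) (S : I -> (H -> H)) : Prop :=
  (forall j, U (S j)) /\
  forall A, U A -> forall eps : R, 0 < eps -> exists j0 : I, forall j, le j0 j ->
    nU (fun x => S j (A x) - A x) < eps /\ nU (fun x => A (S j x) - A x) < eps.

Definition approx_right_invertible (U : set (H -> H)) (nU : (H -> H) -> R)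
    (T : H -> H) : Prop :=
  exists (I : Type) (le : I -> I -> Prop) (Rj : I -> (H -> H)),
    directed le /\ (forall j, U (Rj j)) /\
    approx_identity U nU le (fun j x => T (Rj j x)).

Definition approx_left_invertible (U : set (H -> H)) (nU : (H -> H) -> R)
    (T : H -> H) : Prop :=
  exists (I : Type) (le : I -> I -> Prop) (Lj : I -> (H -> H)),
    directed le /\ (forall j, U (Lj j)) /\
    approx_identity U nU le (fun j x => Lj j (T x)).

Definition dense_range (T : H -> H) : Prop :=
  forall (y : H) (eps : R), 0 < eps -> exists x : H, hnorm (T x - y) < eps.

Definition trivial_kernel (T : H -> H) : Prop :=
  forall x : H, T x = 0 -> x = 0.

End OperatorIdeals.

From mathcomp Require Import all_boot all_order all_algebra.
From mathcomp Require Import all_classical all_reals.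
From mathcomp Require Import complex.
From mathcomp Require Import ring lra.
Set Implicit Arguments.
Unset Strict Implicit.
Unset Printing Implicit Defensive.
Import Order.TTheory GRing.Theory Num.Theory.
Local Open Scope complex_scope.
Local Open Scope ring_scope.
Local Open Scope classical_set_scope.

(* Necessity: test the approximate identity T R_j (L_j T) on the rank-one
   operator y (x) y; the ideal norm of the defect is |T R_j y - y| |y|, resp.
   |x|^2 when T x = 0.
   Sufficiency: index a net by stages (Z, n), Z a finite list of vectors.
   Gram-Schmidt gives an orthonormal basis e of span Z, and small
   perturbations a, b of e give P = sum a k (x) b k, of norm <= 2, which with
   its adjoint nearly fixes Z ("near identity").  Dense range realises such a
   P as T R_j; if ker T = 0 the adjoint of T has dense range (projection
   theorem), realising P as L_j T.  As finite sums of rank-one operators are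
   dense in U (finite-rank operators are such sums, using adjoints from the
   Riesz representation), every net of near identities is an approximate
   identity of U. *)

Section ComplexModulus.
Variable R : realType.
Implicit Types (a b : R[i]) (s : R).

Definition cmod (z : R[i]) : R := complex.Re `|z|.

Lemma cmodE a : (cmod a)%:C = `|a|.
Proof. by rewrite /cmod normc_def. Qed.

Lemma cmod_sqrt a : cmod a = Num.sqrt (complex.Re a ^+ 2 + complex.Im a ^+ 2).
Proof. by rewrite /cmod normc_def. Qed.

Lemma cmod_ge0 a : 0 <= cmod a.
Proof. by rewrite cmod_sqrt sqrtr_ge0. Qed.

Lemma cmodM a b : cmod (a * b) = cmod a * cmod b.
Proof. by apply: complexI; rewrite rmorphM /= !cmodE normrM. Qed.

Lemma cmodN a : cmod (- a) = cmod a.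
Proof. by apply: complexI; rewrite !cmodE normrN. Qed.

Lemma cmodJ a : cmod a^* = cmod a.
Proof. by apply: complexI; rewrite !cmodE norm_conjC. Qed.

Lemma cmod0 : cmod 0 = 0.
Proof. by apply: complexI; rewrite !cmodE normr0. Qed.

Lemma cmod_eq0 a : cmod a = 0 -> a = 0.
Proof. by move=> h; apply/normr0_eq0; rewrite -cmodE h. Qed.

Lemma cmod_real s : cmod s%:C = `|s|.
Proof. by rewrite cmod_sqrt /= expr0n /= addr0 sqrtr_sqr. Qed.

Lemma cmodN1 : cmod (-1 : R[i]) = 1.
Proof. by rewrite -(rmorph1 (real_complex R)) -rmorphN cmod_real normrN normr1. Qed.

Lemma cmod_sqr a : cmod a ^+ 2 = complex.Re a ^+ 2 + complex.Im a ^+ 2.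
Proof. by rewrite cmod_sqrt sqr_sqrtr // addr_ge0 // sqr_ge0. Qed.

Lemma conjE a : a^* = complex.Re a -i* complex.Im a.
Proof. by case: a. Qed.

Lemma conj_real s : (s%:C)^* = s%:C :> R[i].
Proof. by rewrite conjE /= oppr0. Qed.

Lemma mul_conj a : a * a^* = (cmod a ^+ 2)%:C.
Proof.
case: a => p q; rewrite cmod_sqr /=; apply/eqP; rewrite eq_complex /=.
by apply/andP; split; apply/eqP; ring.
Qed.

End ComplexModulus.

Section InnerProduct.
Variables (R : realType) (H : lmodType R[i]) (ip : H -> H -> R[i]).
Hypothesis hip : is_inner_product ip.
Implicit Types (a : R[i]) (x y z : H).
Local Notation hn := (hnorm ip).

Lemma ipDZl a x y z : ip (a *: x + y) z = a * ip x z + ip y z.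
Proof. by case: hip. Qed.

Lemma ipC x y : ip y x = (ip x y)^*.
Proof. by case: hip. Qed.

Lemma ip_definite x : ip x x = 0 -> x = 0.
Proof. by case: hip => _ _ _; apply. Qed.

Lemma ip0l z : ip 0 z = 0.
Proof.
have := ipDZl 1 0 0 z; rewrite scaler0 addr0 mul1r => h.
by apply: (addrI (ip 0 z)); rewrite addr0 -h.
Qed.

Lemma ipDl x y z : ip (x + y) z = ip x z + ip y z.
Proof. by rewrite -[x in LHS]scale1r ipDZl mul1r. Qed.

Lemma ipZl a x z : ip (a *: x) z = a * ip x z.
Proof. by rewrite -[_ *: _]addr0 ipDZl ip0l addr0. Qed.

Lemma ipNl x z : ip (- x) z = - ip x z.
Proof. by rewrite -scaleN1r ipZl mulN1r. Qed.

Lemma ipBl x y z : ip (x - y) z = ip x z - ip y z.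
Proof. by rewrite ipDl ipNl. Qed.

Lemma ip0r z : ip z 0 = 0.
Proof. by rewrite ipC ip0l conjC0. Qed.

Lemma ipDr x y z : ip z (x + y) = ip z x + ip z y.
Proof. by rewrite [LHS]ipC ipDl rmorphD (ipC x z) (ipC y z). Qed.

Lemma ipZr a x z : ip z (a *: x) = a^* * ip z x.
Proof. by rewrite [LHS]ipC ipZl rmorphM (ipC x z). Qed.

Lemma ipNr x z : ip z (- x) = - ip z x.
Proof. by rewrite [LHS]ipC ipNl rmorphN (ipC x z). Qed.

Lemma ipBr x y z : ip z (x - y) = ip z x - ip z y.
Proof. by rewrite ipDr ipNr. Qed.

Lemma ip_suml (I : Type) (r : seq I) (P : pred I) (F : I -> H) z :
  ip (\sum_(i <- r | P i) F i) z = \sum_(i <- r | P i) ip (F i) z.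
Proof. exact: (big_morph (ip^~ z) (fun x y => ipDl x y z) (ip0l z)). Qed.

Lemma ip_sumr (I : Type) (r : seq I) (P : pred I) (F : I -> H) z :
  ip z (\sum_(i <- r | P i) F i) = \sum_(i <- r | P i) ip z (F i).
Proof. exact: (big_morph (ip z) (fun x y => ipDr x y z) (ip0r z)). Qed.

Lemma ip_inj_r u v : (forall x, ip x u = ip x v) -> u = v.
Proof. by move=> h; apply/subr0_eq/ip_definite; rewrite ipBr h subrr. Qed.

Definition sqnorm x : R := complex.Re (ip x x).

Lemma ipxx x : ip x x = (sqnorm x)%:C.
Proof.
case: hip => _ _ h _; have := h x; rewrite lecE /= => /andP [/eqP hi _].
by rewrite /sqnorm; case: (ip x x) hi => p q /= ->.
Qed.

Lemma sqnorm_ge0 x : 0 <= sqnorm x.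
Proof. by case: hip => _ _ h _; have := h x; rewrite ipxx lecR. Qed.

Lemma sqnorm0 : sqnorm 0 = 0.
Proof. by rewrite /sqnorm ip0l. Qed.

Lemma hnorm_ge0 x : 0 <= hn x.
Proof. exact: sqrtr_ge0. Qed.

Lemma hnormK x : hn x ^+ 2 = sqnorm x.
Proof. by rewrite /hnorm sqr_sqrtr // sqnorm_ge0. Qed.

Lemma hnorm_eq0 x : hn x = 0 -> x = 0.
Proof. by move=> h; apply: ip_definite; rewrite ipxx -hnormK h expr0n. Qed.

Lemma hnorm_gt0 x : x != 0 -> 0 < hn x.
Proof. by move=> nx; rewrite lt_def hnorm_ge0 andbT; apply: contra nx => /eqP/hnorm_eq0 ->. Qed.

Lemma hnorm0 : hn 0 = 0.
Proof. by rewrite /hnorm -/(sqnorm 0) sqnorm0 sqrtr0. Qed.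

Lemma sqnormZ a x : sqnorm (a *: x) = cmod a ^+ 2 * sqnorm x.
Proof. by rewrite /sqnorm ipZl ipZr mulrA mul_conj ipxx /= mul0r subr0. Qed.

Lemma hnormZ a x : hn (a *: x) = cmod a * hn x.
Proof.
by rewrite /hnorm -!/(sqnorm _) sqnormZ sqrtrM ?sqr_ge0 // sqrtr_sqr ger0_norm ?cmod_ge0.
Qed.

Lemma hnormN x : hn (- x) = hn x.
Proof. by rewrite -scaleN1r hnormZ cmodN1 mul1r. Qed.

Lemma hnormB x y : hn (x - y) = hn (y - x).
Proof. by rewrite -hnormN opprB. Qed.

Lemma hnorm_lt x (e : R) : 0 < e -> sqnorm x < e ^+ 2 -> hn x < e.
Proof. by move=> e0 h; rewrite -(ltr_pXn2r (n:=2)) ?nnegrE ?hnorm_ge0 ?ltW // hnormK. Qed.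

Lemma hnorm_le x (e : R) : 0 <= e -> hn x <= e -> sqnorm x <= e ^+ 2.
Proof. by move=> e0 h; rewrite -hnormK ler_pXn2r ?nnegrE ?hnorm_ge0. Qed.

Definition reip x y : R := complex.Re (ip x y).

Lemma reipC x y : reip y x = reip x y.
Proof. by rewrite /reip ipC conjE. Qed.

Lemma reipNr x y : reip x (- y) = - reip x y.
Proof. by rewrite /reip ipNr; case: (ip x y). Qed.

Lemma reipZl (s : R) x z : reip (s%:C *: x) z = s * reip x z.
Proof. by rewrite /reip ipZl; case: (ip x z) => p q /=; rewrite mul0r subr0. Qed.

Lemma sqnormD x y : sqnorm (x + y) = sqnorm x + sqnorm y + 2 * reip x y.
Proof.
rewrite /sqnorm ipDl !ipDr; have := reipC x y; rewrite /reip.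
move: (ip x x) (ip x y) (ip y x) (ip y y) => [a1 a2] [b1 b2] [c1 c2] [d1 d2] /= ->.
ring.
Qed.

Lemma sqnormN x : sqnorm (- x) = sqnorm x.
Proof. by rewrite -!hnormK hnormN. Qed.

Lemma parallelogram x y :
  sqnorm (x + y) + sqnorm (x - y) = 2 * sqnorm x + 2 * sqnorm y.
Proof. by rewrite !sqnormD sqnormN reipNr; ring. Qed.

(* Cauchy-Schwarz for the real part, from sqnorm (x - s y) >= 0. *)
Lemma reip_sqr_le x y : reip x y ^+ 2 <= sqnorm x * sqnorm y.
Proof.
have [y0|ny] := eqVneq y 0.
  by rewrite y0 /reip ip0r /= expr0n /= sqnorm0 mulr0.
have np : 0 < sqnorm y by rewrite -hnormK exprn_gt0 // hnorm_gt0.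
pose s := reip x y / sqnorm y.
have := sqnorm_ge0 (x + (- s)%:C *: y).
rewrite sqnormD sqnormZ cmod_real real_normK ?num_real // reipC reipZl reipC.
have -> : sqnorm x + (- s) ^+ 2 * sqnorm y + 2 * (- s * reip x y)
  = sqnorm x - reip x y ^+ 2 / sqnorm y by rewrite /s; field; lra.
by rewrite subr_ge0 ler_pdivrMr.
Qed.

Lemma reip_le x y : reip x y <= hn x * hn y.
Proof.
apply: (le_trans (ler_norm _)).
rewrite -(ler_pXn2r (n:=2)) ?nnegrE ?normr_ge0 ?mulr_ge0 ?hnorm_ge0 //.
by rewrite real_normK ?num_real // exprMn !hnormK reip_sqr_le.
Qed.

Lemma hnormD x y : hn (x + y) <= hn x + hn y.
Proof.
rewrite -(ler_pXn2r (n:=2)) ?nnegrE ?addr_ge0 ?hnorm_ge0 //.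
rewrite hnormK sqnormD sqrrD !hnormK -mulr_natl.
by have := reip_le x y; lra.
Qed.

Lemma hnorm_sum (I : Type) (r : seq I) (P : pred I) (F : I -> H) :
  hn (\sum_(i <- r | P i) F i) <= \sum_(i <- r | P i) hn (F i).
Proof.
elim/big_rec2: _; first by rewrite hnorm0.
by move=> i y1 y2 _ h; apply: (le_trans (hnormD _ _)); rewrite lerD2l.
Qed.

(* Cauchy-Schwarz: |<x,y>| <= |x| |y|, by rotating x by the phase of <x,y>. *)
Lemma cauchy_schwarz x y : cmod (ip x y) <= hn x * hn y.
Proof.
set c := ip x y.
have e : reip (c^* *: x) y = cmod c ^+ 2 by rewrite /reip ipZl -/c mulrC mul_conj.
have := reip_le (c^* *: x) y; rewrite e hnormZ cmodJ.
have [->|cn] := eqVneq (cmod c) 0; first by rewrite mulr_ge0 ?hnorm_ge0.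
have cp : 0 < cmod c by rewrite lt_def cn cmod_ge0.
by rewrite expr2 -mulrA ler_pM2l.
Qed.

End InnerProduct.

Section Operators.
Variables (R : realType) (H : lmodType R[i]) (ip : H -> H -> R[i]).
Hypothesis hip : is_inner_product ip.
Implicit Types (a : R[i]) (x y : H) (T : H -> H).
Local Notation hn := (hnorm ip).

Section Linear.
Variable T : H -> H.
Hypothesis hT : linear_op T.

Lemma lin0 : T 0 = 0.
Proof.
have := hT 1 0 0; rewrite scaler0 addr0 scale1r => h.
by apply: (addrI (T 0)); rewrite addr0 -h.
Qed.

Lemma linD x y : T (x + y) = T x + T y.
Proof. by rewrite -[x in LHS]scale1r hT scale1r. Qed.

Lemma linZ a x : T (a *: x) = a *: T x.
Proof. by rewrite -[_ *: _]addr0 hT lin0 addr0. Qed.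

Lemma linB x y : T (x - y) = T x - T y.
Proof. by rewrite linD -scaleN1r linZ scaleN1r. Qed.

Lemma lin_sum (I : Type) (r : seq I) (P : pred I) (F : I -> H) :
  T (\sum_(i <- r | P i) F i) = \sum_(i <- r | P i) T (F i).
Proof. exact: (big_morph T linD lin0). Qed.

End Linear.

Lemma opnorm_le T M : 0 <= M -> (forall x, hn (T x) <= M * hn x) -> opnorm ip T <= M.
Proof.
move=> M0 hb; apply: ge_sup.
  by exists (hn (T 0)), 0 => //; rewrite /= (hnorm0 hip) ler01.
move=> _ [x /= hx <-]; apply: (le_trans (hb x)).
by rewrite -[leRHS]mulr1 ler_wpM2l.
Qed.

Lemma opnorm_ge0 T : bounded_op ip T -> 0 <= opnorm ip T.
Proof.
move=> [hl [M hM]]; have <- : hn (T 0) = 0 by rewrite lin0 // (hnorm0 hip).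
apply: ub_le_sup; last by exists 0 => //=; rewrite (hnorm0 hip) ler01.
exists `|M| => _ [y /= hy <-]; apply: (le_trans (hM y)).
apply: (le_trans (ler_norm _)); rewrite normrM (ger0_norm (hnorm_ge0 _ _)).
by rewrite -[leRHS]mulr1 ler_wpM2l.
Qed.

Lemma bounded_id : bounded_op ip id.
Proof. by split => //; exists 1 => x; rewrite mul1r. Qed.

Lemma bounded_tensor f g : bounded_op ip (tensor ip f g).
Proof.
split; first by move=> a x y; rewrite /tensor (ipDZl hip) scalerDl scalerA.
exists (hn g * hn f) => x; rewrite /tensor (hnormZ hip).
by rewrite mulrAC ler_wpM2r ?hnorm_ge0 // mulrC cauchy_schwarz.
Qed.

End Operators.

Section IdealFacts.
Variables (R : realType) (H : lmodType R[i]) (ip : H -> H -> R[i]).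
Hypothesis hip : is_inner_product ip.
Variables (U : set (H -> H)) (nU : (H -> H) -> R).
Hypothesis hU : is_normed_operator_ideal ip U nU.
Implicit Types (a : R[i]) (x y : H) (T S A B : H -> H).
Local Notation hn := (hnorm ip).

Lemma U_bounded T : U T -> bounded_op ip T.
Proof. by case: hU => [[hb _] _]; apply: hb. Qed.

Lemma U_lin T : U T -> linear_op T.
Proof. by case/U_bounded. Qed.

Lemma U0 : U (fun _ => 0).
Proof. by case: hU => [[_ [h0 _]] _]. Qed.

Lemma UD S T : U S -> U T -> U (fun x => S x + T x).
Proof. by case: hU => [[_ [_ [hD _]]] _]; apply: hD. Qed.

Lemma UZ a T : U T -> U (fun x => a *: T x).
Proof. by case: hU => [[_ [_ [_ hZ]]]] _; apply: hZ. Qed.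

Lemma UB S T : U S -> U T -> U (fun x => S x - T x).
Proof.
move=> hS /(UZ (-1)) hT; have := UD hS hT.
by under eq_fun do rewrite scaleN1r.
Qed.

Lemma U_finite_rank F : finite_rank ip F -> U F.
Proof. by case: hU => _ [_ [hfin _]]; apply: hfin. Qed.

Lemma nU_ge0 T : U T -> 0 <= nU T.
Proof. by case: hU => _ [_ [_ [_ [[hge _] _]]]]; apply: hge. Qed.

Lemma nUD S T : U S -> U T -> nU (fun x => S x + T x) <= nU S + nU T.
Proof. by case: hU => _ [_ [_ [_ [[_ [_ [htri _]]] _]]]]; apply: htri. Qed.

Lemma nUZ a T : U T -> nU (fun x => a *: T x) = cmod a * nU T.
Proof. by case: hU => _ [_ [_ [_ [[_ [_ [_ hZ]]] _]]]]; apply: hZ. Qed.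

Lemma nU_ideal A T B : bounded_op ip A -> U T -> bounded_op ip B ->
  nU (fun x => A (T (B x))) <= opnorm ip A * nU T * opnorm ip B.
Proof. by case: hU => _ [_ [_ [_ [_ [hid _]]]]]; apply: hid. Qed.

Lemma nU_dense T : U T -> forall eps : R, 0 < eps ->
  exists F, finite_rank ip F /\ nU (fun x => T x - F x) < eps.
Proof. by case: hU => _ [_ [_ [_ [_ [_ [_ [_ [hd _]]]]]]]]; apply: hd. Qed.

Lemma nU_tensor f g : nU (tensor ip f g) = hn f * hn g.
Proof. by case: hU => _ [_ [_ [_ [_ [_ [_ [_ [_ ht]]]]]]]]; apply: ht. Qed.

Lemma nU0 : nU (fun _ => 0) = 0.
Proof. by have := nUZ 0 U0; rewrite cmod0 mul0r; under eq_fun do rewrite scale0r. Qed.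

Lemma nUB S T : U S -> U T -> nU (fun x => S x - T x) = nU (fun x => T x - S x).
Proof.
move=> hS hT; have := nUZ (-1) (UB hT hS); rewrite cmodN1 mul1r => <-.
by congr nU; apply: funext => x; rewrite scaleN1r opprB.
Qed.

Lemma U_tensor f g : U (tensor ip f g).
Proof.
apply: U_finite_rank; split; first exact: bounded_tensor.
exists 2, 1, (fun _ => f); split => // x.
by exists (fun _ => ip x g); rewrite big_ord1.
Qed.

Lemma U_sum n (F : nat -> H -> H) : (forall i, U (F i)) ->
  U (fun x => \sum_(i < n) F i x).
Proof.
move=> hF; elim: n => [|n IH].
  by under eq_fun do rewrite big_ord0; apply: U0.
by under eq_fun do rewrite big_ord_recr /=; apply: UD.
Qed.

Lemma nU_sum n (F : nat -> H -> H) : (forall i, U (F i)) ->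
  nU (fun x => \sum_(i < n) F i x) <= \sum_(i < n) nU (F i).
Proof.
move=> hF; elim: n => [|n IH].
  by under eq_fun do rewrite big_ord0; rewrite nU0 big_ord0.
under eq_fun do rewrite big_ord_recr /=.
by rewrite big_ord_recr /=; apply: (le_trans (nUD (U_sum _ hF) (hF n))); rewrite lerD2r.
Qed.

Lemma nU_comp_le A T B (MA MB : R) : bounded_op ip A -> U T -> bounded_op ip B ->
  0 <= MA -> 0 <= MB -> (forall x, hn (A x) <= MA * hn x) ->
  (forall x, hn (B x) <= MB * hn x) ->
  nU (fun x => A (T (B x))) <= MA * nU T * MB.
Proof.
move=> hA hT hB MA0 MB0 hMA hMB; apply: (le_trans (nU_ideal hA hT hB)).
have nT := nU_ge0 hT.
apply: ler_pM; rewrite ?mulr_ge0 ?opnorm_ge0 ?opnorm_le //.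
by apply: ler_pM; rewrite ?opnorm_ge0 ?opnorm_le.
Qed.

Lemma nU_left A T M : U T -> bounded_op ip A -> 0 <= M ->
  (forall x, hn (A x) <= M * hn x) -> nU (fun x => A (T x)) <= M * nU T.
Proof.
move=> hT hA M0 hM; rewrite -[leRHS]mulr1.
by apply: (nU_comp_le hA hT (bounded_id ip)) => // x; rewrite mul1r.
Qed.

Lemma nU_right A T M : U T -> bounded_op ip A -> 0 <= M ->
  (forall x, hn (A x) <= M * hn x) -> nU (fun x => T (A x)) <= M * nU T.
Proof.
move=> hT hA M0 hM; rewrite mulrC -(mul1r (nU T)).
by apply: (nU_comp_le (bounded_id ip) hT hA) => // x; rewrite mul1r.
Qed.

End IdealFacts.

Lemma inv_succ_lt (R : realType) (d : R) : 0 < d ->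
  exists N : nat, forall n, (N <= n)%N -> n.+1%:R^-1 < d.
Proof.
move=> d0; have hi : 0 <= d^-1 by rewrite invr_ge0 ltW.
have := archi_boundP hi.
set N := Num.Def.archi_bound _ => hN; exists N => n hn.
rewrite invf_plt ?posrE ?ltr0Sn // (lt_le_trans hN) // ler_nat; exact: leqW.
Qed.

Section BestApproximation.
Variables (R : realType) (H : lmodType R[i]) (ip : H -> H -> R[i]).
Hypothesis hip : is_inner_product ip.
Variables (M : set H) (x : H).
Hypothesis M0 : M 0.
Hypothesis M_lin : forall a m1 m2, M m1 -> M m2 -> M (a *: m1 + m2).
Implicit Types (m z : H).
Local Notation hn := (hnorm ip).
Local Notation sqnorm := (sqnorm ip).

Lemma orthogonal_of_minimal z m : (forall t : R[i], hn z <= hn (z + t *: m)) -> ip z m = 0.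
Proof.
move=> hmin; set c := ip z m; pose N := sqnorm m.
have N0 : 0 <= N by apply: sqnorm_ge0.
pose s := (N + 1)^-1.
have s0 : 0 < s by rewrite invr_gt0; lra.
have sN : s * N < 1 by rewrite /s mulrC ltr_pdivrMr ?mul1r; lra.
have := hnorm_le hip (hnorm_ge0 _ _) (hmin (- (s%:C * c))); rewrite hnormK //.
rewrite sqnormD // sqnormZ // /reip ipZr // -/c -/N.
have -> : complex.Re ((- (s%:C * c))^* * c) = - (s * cmod c ^+ 2).
  by rewrite cmod_sqr; case: (c) => p q; rewrite conjE /=; ring.
rewrite cmodN cmodM cmod_real ger0_norm ?(ltW s0) // exprMn => h.
have hc : cmod c ^+ 2 <= 0.
  have : 0 <= s * (s * cmod c ^+ 2 * N - 2 * cmod c ^+ 2) by nra.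
  by rewrite pmulr_rge0 //; nra.
by apply: cmod_eq0; apply/eqP; rewrite -sqrf_eq0 eq_le hc sqr_ge0.
Qed.

Let dist := inf [set hn (x - m) | m in M].

Let dist_ge0 : 0 <= dist.
Proof. by apply: lb_le_inf; [exists (hn (x - 0)), 0 | move=> _ [m _ <-]; apply: hnorm_ge0]. Qed.

Let dist_le m : M m -> dist <= hn (x - m).
Proof.
move=> hm; apply: ge_inf; last by exists m.
by exists 0 => _ [m' _ <-]; apply: hnorm_ge0.
Qed.

Let dist_approx n : exists m, M m /\ hn (x - m) < dist + n.+1%:R^-1.
Proof.
have : dist < dist + n.+1%:R^-1 by rewrite ltrDl invr_gt0 ltr0Sn.
by case/inf_lt => [|_ [m hm <-] h]; [exists (hn (x - 0)), 0 | exists m].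
Qed.

(* A minimizing sequence is Cauchy, by the parallelogram law applied to
   x - f p and x - f q, whose midpoint is at distance at least dist. *)
Let minimizing_cauchy (f : nat -> H) : (forall n, M (f n)) ->
  (forall n, hn (x - f n) < dist + n.+1%:R^-1) -> cauchy_seq ip f.
Proof.
move=> fM hf eps e0; have d0 : 0 <= dist := dist_ge0; set d := dist in d0 *.
pose de := Num.min 1 (eps ^+ 2 / (8 * d + 5)).
have de0 : 0 < de by rewrite lt_min ltr01 /= divr_gt0 ?exprn_gt0 //; lra.
have de1 : de <= 1 by rewrite ge_min lexx.
have de2 : de * (8 * d + 5) <= eps ^+ 2.
  by rewrite -ler_pdivlMr; [rewrite ge_min lexx orbT | lra].
have [N hN] := inv_succ_lt de0; exists N => p q hp hq.
have close n : (N <= n)%N -> sqnorm (x - f n) <= (d + de) ^+ 2.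
  move=> hn; apply: (hnorm_le hip); first by lra.
  by apply: ltW (lt_le_trans (hf n) _); rewrite lerD2l ltW // hN.
have mid : d ^+ 2 <= sqnorm (x - (2^-1 *: f p + 2^-1 *: f q)).
  rewrite -hnormK // ler_pXn2r ?nnegrE ?hnorm_ge0 //; apply: dist_le.
  by apply: M_lin => //; rewrite -[_ *: f q]addr0; apply: M_lin.
have par := parallelogram hip (x - f q) (x - f p).
have e1 : (x - f q) - (x - f p) = f p - f q by rewrite opprB addrC addrA subrK.
have e2 : (x - f q) + (x - f p) = (2 : R[i]) *: (x - (2^-1 *: f p + 2^-1 *: f q)).
  rewrite scalerBr scalerDr !scalerA mulfV ?pnatr_eq0 // !scale1r.
  by rewrite scaler_nat mulr2n opprD [RHS]addrACA addrC.
have c2 : cmod (2 : R[i]) = 2.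
  by rewrite -(rmorph_nat (real_complex R) 2) cmod_real ger0_norm.
rewrite e1 e2 sqnormZ // c2 in par.
apply: (hnorm_lt hip) => //; have := close _ hp; have := close _ hq.
have hde : de ^+ 2 <= de by nra.
lra.
Qed.

Lemma residual_minimal (hcomp : forall u : nat -> H, cauchy_seq ip u ->
    exists l, seq_converges_to ip u l) :
  exists z, (forall eps : R, 0 < eps -> exists m, M m /\ hn (x - z - m) < eps) /\
    (forall m, M m -> hn z <= hn (z + m)).
Proof.
have [f hf] := choice dist_approx.
have fM n : M (f n) by case: (hf n).
have [p hp] := hcomp f (minimizing_cauchy fM (fun n => proj2 (hf n))).
have ex : x - (x - p) = p by rewrite opprB addrC subrK.
exists (x - p); split.
  move=> eps e0; have [N hN] := hp eps e0.
  by exists (f N); split => //; rewrite ex (hnormB hip); apply: hN.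
have hz : hn (x - p) <= dist.
  apply/ler_addgt0Pr => e e0.
  have e2 : 0 < e / 2 by rewrite divr_gt0.
  have [N1 h1] := hp _ e2; have [N2 h2] := inv_succ_lt e2.
  pose n := maxn N1 N2; have [_ hxn] := hf n.
  have := hnormD hip (x - f n) (f n - p); rewrite addrA subrK.
  have := h1 n (leq_maxl _ _); have := h2 n (leq_maxr _ _).
  move: (splitr e) hxn; move: (e / 2) (n.+1%:R^-1) => a b; lra.
move=> m hm; apply: (le_trans hz); apply/ler_addgt0Pr => e e0.
have [N hN] := hp _ e0.
have := dist_le (M_lin (-1) hm (fM N)).
have -> : x - (-1 *: m + f N) = (x - p + m) - (f N - p).
  by rewrite scaleN1r opprB [x - p + m]addrAC subrKA opprD opprK addrA.
have := hnormD hip (x - p + m) (- (f N - p)); rewrite hnormN //.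
have := hN N (leqnn _); lra.
Qed.

Lemma best_approximation (hcomp : forall u : nat -> H, cauchy_seq ip u ->
    exists l, seq_converges_to ip u l) :
  exists z, (forall m, M m -> ip m z = 0) /\
    (forall eps : R, 0 < eps -> exists m, M m /\ hn (x - z - m) < eps).
Proof.
have [z [happ hmin]] := residual_minimal hcomp.
exists z; split => // m hm; rewrite ipC // orthogonal_of_minimal ?conjC0 // => t.
by apply: hmin; rewrite -[_ *: m]addr0; apply: M_lin.
Qed.

End BestApproximation.

Section Adjoints.
Variables (R : realType) (H : lmodType R[i]) (ip : H -> H -> R[i]).
Hypothesis hip : is_inner_product ip.
Hypothesis hcomp : forall u : nat -> H, cauchy_seq ip u -> exists l, seq_converges_to ip u l.
Implicit Types (a : R[i]) (x y z : H) (T : H -> H).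
Local Notation hn := (hnorm ip).

(* Riesz: a bounded linear functional phi is <., w> where w is a multiple of
   the residual z of a vector off ker phi, which is orthogonal to ker phi. *)
Lemma riesz (phi : H -> R[i]) (C : R) :
  (forall a x y, phi (a *: x + y) = a * phi x + phi y) ->
  (forall x, cmod (phi x) <= C * hn x) ->
  exists w, forall x, phi x = ip x w.
Proof.
move=> hl hb.
have phi0 : phi 0 = 0.
  have := hl 1 0 0; rewrite scaler0 addr0 mul1r => h.
  by apply: (addrI (phi 0)); rewrite addr0 -h.
have phiZ a x : phi (a *: x) = a * phi x by rewrite -[_ *: _]addr0 hl phi0 addr0.
have phiB x y : phi (x - y) = phi x - phi y.
  by rewrite -scaleN1r -[x]scale1r hl mul1r phiZ mulN1r scale1r.
have [allz|/existsNP [x0 hx0]] := pselect (forall x, phi x = 0).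
  by exists 0 => x; rewrite allz (ip0r hip).
pose M := [set m | phi m = 0].
have M_lin a m1 m2 : M m1 -> M m2 -> M (a *: m1 + m2).
  by rewrite /M /= hl => -> ->; rewrite mulr0 addr0.
have [z [hz hap]] := best_approximation hip x0 (phi0 : M 0) M_lin hcomp.
have pz : phi (x0 - z) = 0.
  apply: cmod_eq0; apply/eqP; rewrite eq_le cmod_ge0 andbT.
  apply/ler_addgt0Pr => e e0; rewrite add0r.
  have e1 : 0 < e / (`|C| + 1) by rewrite divr_gt0 // ltr_pwDr.
  have [m [hm hme]] := hap _ e1.
  have -> : phi (x0 - z) = phi (x0 - z - m) by rewrite [RHS]phiB hm subr0.
  apply: (le_trans (hb _)).
  apply: (le_trans (ler_norm _)); rewrite normrM (ger0_norm (hnorm_ge0 _ _)).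
  apply: (le_trans (ler_wpM2l (normr_ge0 _) (ltW hme))).
  by rewrite mulrCA ger_pMr // ler_pdivrMr ?mul1r ?lerDl // ltr_pwDr.
have pzx : phi z = phi x0 by apply/eqP; rewrite eq_sym -subr_eq0 -phiB pz.
have zn : ip z z != 0.
  by apply: contra_not_neq hx0 => /(ip_definite hip) z0; rewrite -pzx z0.
exists ((phi z / ip z z)^* *: z) => x.
have hm : M (phi z *: x + (- phi x) *: z) by rewrite /M /= hl phiZ mulrC mulNr subrr.
have := hz _ hm; rewrite (ipDl hip) !(ipZl hip) (ipZr hip) conjCK mulNr.
move/eqP; rewrite subr_eq0 => /eqP h.
by apply: (mulIf zn); rewrite -h; field.
Qed.

Lemma adjoint_exists T : bounded_op ip T -> exists Ts : H -> H, is_adjoint ip T Ts.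
Proof.
move=> [hl [M hM]].
have h y : exists w, forall x, ip (T x) y = ip x w.
  apply: (@riesz (fun x => ip (T x) y) (`|M| * hn y)).
    by move=> a x z; rewrite hl (ipDZl hip).
  move=> x; apply: (le_trans (cauchy_schwarz hip _ _)).
  rewrite mulrAC ler_wpM2r ?hnorm_ge0 //; apply: (le_trans (hM x)).
  by apply: (le_trans (ler_norm _)); rewrite normrM (ger0_norm (hnorm_ge0 _ _)).
have [Ts hTs] := choice h.
by exists Ts => x y; rewrite hTs.
Qed.

Lemma adjoint_linear T Ts : is_adjoint ip T Ts -> linear_op Ts.
Proof.
move=> hTs a g1 g2; apply: (ip_inj_r hip) => x.
by rewrite -hTs (ipDr hip) (ipZr hip) !hTs (ipDr hip) (ipZr hip).
Qed.

(* If ker T = 0 then the range of the adjoint is dense: the residual of any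
   vector is orthogonal to the range of Ts, hence lies in ker T. *)
Lemma adjoint_dense_range T Ts : is_adjoint ip T Ts -> trivial_kernel T ->
  dense_range ip Ts.
Proof.
move=> hTs hk y eps e0.
pose M := [set v | exists g, v = Ts g].
have M0 : M 0 by exists 0; rewrite (lin0 (adjoint_linear hTs)).
have M_lin a m1 m2 : M m1 -> M m2 -> M (a *: m1 + m2).
  by move=> [g1 ->] [g2 ->]; exists (a *: g1 + g2); rewrite (adjoint_linear hTs).
have [z [hz hap]] := best_approximation hip y M0 M_lin hcomp.
have z0 : z = 0.
  apply: hk; apply: (ip_definite hip).
  by rewrite hTs (ipC hip) hz ?conjC0 //; exists (T z).
have [_ [[g ->] hm]] := hap _ e0.
by exists g; rewrite (hnormB hip); move: hm; rewrite z0 subr0.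
Qed.

End Adjoints.

(* Finite sums of rank-one operators  x |-> sum_i <x, w i> u i,  i.e. the
   operator  sum_(i < m) u i (x) w i,  and orthonormal systems. *)
Section FiniteSums.
Variables (R : realType) (H : lmodType R[i]) (ip : H -> H -> R[i]).
Hypothesis hip : is_inner_product ip.
Implicit Types (a : R[i]) (x y z : H) (e u w : nat -> H).
Local Notation hn := (hnorm ip).

Definition finop (m : nat) (u w : nat -> H) : H -> H :=
  fun x => \sum_(i < m) ip x (w i) *: u i.

Lemma finop_linear m u w : linear_op (finop m u w).
Proof.
move=> a x y; rewrite /finop scaler_sumr -big_split /=.
by apply: eq_bigr => i _; rewrite (ipDZl hip) scalerDl scalerA.
Qed.

Lemma finop_adjoint m u w : is_adjoint ip (finop m u w) (finop m w u).
Proof.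
move=> x y; rewrite /finop (ip_suml hip) (ip_sumr hip); apply: eq_bigr => j _.
by rewrite (ipZl hip) (ipZr hip) -(ipC hip) mulrC.
Qed.

Lemma finop_compr m u w X Xs : is_adjoint ip X Xs ->
  (fun x => finop m u w (X x)) = finop m u (fun i => Xs (w i)).
Proof. by move=> hX; apply: funext => x; apply: eq_bigr => k _; rewrite hX. Qed.

Lemma finop_compl m u w X : linear_op X ->
  (fun x => X (finop m u w x)) = finop m (fun i => X (u i)) w.
Proof.
move=> hX; apply: funext => x; rewrite /finop (lin_sum hX).
by apply: eq_bigr => k _; rewrite (linZ hX).
Qed.

Definition orthonormal (m : nat) (e : nat -> H) :=
  forall i j, (i < m)%N -> (j < m)%N -> ip (e i) (e j) = (i == j)%:R.

Section Orthonormal.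
Variables (m : nat) (e : nat -> H).
Hypothesis he : orthonormal m e.

Lemma orthonormal_norm k : (k < m)%N -> hn (e k) = 1.
Proof. by move=> hk; rewrite /hnorm he // eqxx /= sqrtr1. Qed.

(* finop m e e is the orthogonal projection onto the span of the e k. *)
Lemma proj_coef x k : (k < m)%N -> ip (finop m e e x) (e k) = ip x (e k).
Proof.
move=> hk; rewrite (ip_suml hip) (bigD1 (Ordinal hk)) //= (ipZl hip) he // eqxx mulr1.
rewrite big1 ?addr0 // => j hj; rewrite (ipZl hip) he //.
suff -> : (j == k :> nat) = false by rewrite mulr0.
by apply/negbTE; apply: contra hj => /eqP h; apply/eqP/val_inj.
Qed.

Lemma proj_residual_orth x y : ip (x - finop m e e x) (finop m e e y) = 0.
Proof.
rewrite (ip_sumr hip) big1 // => j _.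
by rewrite (ipZr hip) (ipBl hip) proj_coef // subrr mulr0.
Qed.

Lemma bessel x : hn (finop m e e x) <= hn x.
Proof.
have hx : sqnorm ip x = sqnorm ip (finop m e e x) + sqnorm ip (x - finop m e e x).
  rewrite -[in LHS](subrK (finop m e e x) x) addrC (sqnormD hip (finop m e e x)).
  by rewrite reipC // /reip proj_residual_orth mulr0 addr0.
rewrite -(ler_pXn2r (n:=2)) ?nnegrE ?hnorm_ge0 // !(hnormK hip) hx.
by rewrite lerDl sqnorm_ge0.
Qed.

End Orthonormal.

Definition extend_by (m : nat) (e : nat -> H) (v : H) : nat -> H :=
  fun i => if i == m then v else e i.

Lemma orthonormal_extend m e v : orthonormal m e -> ip v v = 1 ->
  (forall k, (k < m)%N -> ip v (e k) = 0) -> orthonormal m.+1 (extend_by m e v).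
Proof.
move=> he hv hvk i j; rewrite !ltnS /extend_by => hi hj.
case: ifP => [/eqP -> | /negbT him]; case: ifP => [/eqP -> | /negbT hjm].
- by rewrite eqxx hv.
- by rewrite hvk; [rewrite eq_sym (negbTE hjm) | rewrite ltn_neqAle hjm].
- by rewrite (ipC hip) hvk; [rewrite conjC0 (negbTE him) | rewrite ltn_neqAle him].
- by rewrite he // ltn_neqAle ?him ?hjm.
Qed.

Lemma finop_extend m e v x :
  finop m.+1 (extend_by m e v) (extend_by m e v) x = finop m e e x + ip x v *: v.
Proof.
rewrite /finop big_ord_recr /= /extend_by eqxx; congr (_ + _).
by apply: eq_bigr => j _; rewrite ltn_eqF.
Qed.

Lemma gram_schmidt (Z : seq H) : exists m e, orthonormal m e /\
  forall z, z \in Z -> finop m e e z = z.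
Proof.
elim: Z => [|z0 Z [m [e [he hZ]]]]; first by exists 0, (fun _ => 0).
set r := z0 - finop m e e z0.
have r_orth k : (k < m)%N -> ip r (e k) = 0.
  by move=> hk; rewrite (ipBl hip) proj_coef // subrr.
have [r0|rn] := eqVneq r 0.
  exists m, e; split => // z; rewrite inE => /orP [/eqP ->|]; last exact: hZ.
  by apply/eqP; rewrite eq_sym -subr_eq0 -/r r0.
have hr0 : 0 < hn r by apply: hnorm_gt0.
pose v := (hn r)^-1%:C *: r.
have rv : r = (hn r)%:C *: v by rewrite /v scalerA -rmorphM mulfV ?gt_eqF // scale1r.
have vv : ip v v = 1.
  rewrite /v (ipZl hip) (ipZr hip) (ipxx hip) conj_real -!rmorphM -(hnormK hip).
  by rewrite -(rmorph1 (real_complex R)); congr (_%:C); field; rewrite gt_eqF.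
have v_orth k : (k < m)%N -> ip v (e k) = 0.
  by move=> hk; rewrite /v (ipZl hip) r_orth // mulr0.
have proj_v y : ip (finop m e e y) v = 0.
  by rewrite finop_adjoint /finop big1 ?(ip0r hip) // => k hk; rewrite v_orth ?scale0r.
exists m.+1, (extend_by m e v); split; first exact: orthonormal_extend.
move=> z; rewrite inE finop_extend => /orP [/eqP ->|hz].
  have -> : ip z0 v = (hn r)%:C.
    by rewrite -[z0](subrK (finop m e e z0)) -/r (ipDl hip) proj_v addr0 {1}rv (ipZl hip) vv mulr1.
  by rewrite -rv subrKC.
by rewrite -{2}(hZ z hz) proj_v scale0r addr0 hZ.
Qed.

(* A finite-rank operator with an adjoint is a finite sum of rank-one
   operators: expand F x in an orthonormal basis of the span of its range. *)
Lemma finite_rank_finop F Fs k (v : 'I_k -> H) :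
  is_adjoint ip F Fs ->
  (forall x, exists c : 'I_k -> R[i], F x = \sum_(i < k) c i *: v i) ->
  exists m e w, F = finop m e w.
Proof.
move=> hFs hF; have [m [e [he hv]]] := gram_schmidt [seq v i | i <- enum 'I_k].
have proj_range x : finop m e e (F x) = F x.
  have [c ->] := hF x; rewrite (lin_sum (finop_linear m e e)).
  by apply: eq_bigr => i _; rewrite (linZ (finop_linear m e e)) hv // map_f // mem_enum.
exists m, e, (fun j => Fs (e j)); apply: funext => x.
by rewrite -proj_range; apply: eq_bigr => j _; rewrite hFs.
Qed.

End FiniteSums.

Section PerturbedProjections.
Variables (R : realType) (H : lmodType R[i]) (ip : H -> H -> R[i]).
Hypothesis hip : is_inner_product ip.
Implicit Types (x z : H) (a b e : nat -> H).
Local Notation hn := (hnorm ip).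

Lemma finop_perturb m e a b (eta : R) : orthonormal ip m e -> 0 <= eta -> eta <= 1 ->
  (forall j, (j < m)%N -> hn (a j - e j) <= eta) ->
  (forall j, (j < m)%N -> hn (b j - e j) <= eta) ->
  forall x, hn (finop ip m a b x - finop ip m e e x) <= 3 * m%:R * eta * hn x.
Proof.
move=> he e0 e1 ha hb x; rewrite /finop -sumrB.
apply: (le_trans (hnorm_sum hip _ _ _)).
have -> : 3 * m%:R * eta * hn x = \sum_(j < m) (3 * eta * hn x).
  by rewrite sumr_const card_ord -mulr_natl; ring.
apply: ler_sum => j _; have hj := ltn_ord j.
have -> : ip x (b j) *: a j - ip x (e j) *: e j =
    ip x (b j) *: (a j - e j) + ip x (b j - e j) *: e j.
  by rewrite scalerBr (ipBr hip) scalerBl addrA subrK.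
apply: (le_trans (hnormD hip _ _)).
rewrite !(hnormZ hip) (orthonormal_norm he hj) mulr1.
have hbj : hn (b j) <= 1 + eta.
  rewrite -(subrK (e j) (b j)) addrC; apply: (le_trans (hnormD hip _ _)).
  by rewrite (orthonormal_norm he hj) lerD2l hb.
have g0 := hnorm_ge0 ip x.
have t1 : cmod (ip x (b j)) * hn (a j - e j) <= hn x * (1 + eta) * eta.
  apply: ler_pM; rewrite ?cmod_ge0 ?hnorm_ge0 ?ha //.
  by apply: (le_trans (cauchy_schwarz hip _ _)); apply: ler_wpM2l.
have t2 : cmod (ip x (b j - e j)) <= hn x * eta.
  by apply: (le_trans (cauchy_schwarz hip _ _)); apply: ler_wpM2l => //; apply: hb.
have t3 : hn x * eta * eta <= hn x * eta by rewrite ler_piMr ?mulr_ge0.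
lra.
Qed.

Definition near_identity (j : seq H * nat) (P : H -> H) : Prop :=
  exists mp av bv, P = finop ip mp av bv /\
    (forall x, hn (P x) <= 2 * hn x) /\
    (forall z, z \in j.1 -> hn (P z - z) <= j.2.+1%:R^-1 * hn z) /\
    (forall z, z \in j.1 -> hn (finop ip mp bv av z - z) <= j.2.+1%:R^-1 * hn z).

(* For each stage, an orthonormal basis of span Z and a tolerance eta so
   small that eta-perturbations of it are still accurate to 1/(n+1). *)
Lemma stage_basis (j : seq H * nat) : exists m e (eta : R), orthonormal ip m e /\
  (forall z, z \in j.1 -> finop ip m e e z = z) /\
  0 < eta /\ eta <= 1 /\ 3 * m%:R * eta <= j.2.+1%:R^-1.
Proof.
have [m [e [he hZ]]] := gram_schmidt hip j.1.
have h3 : 0 < 3 * m%:R + 3 :> R by rewrite ltr_pwDr // mulr_ge0.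
have hn1 : j.2.+1%:R^-1 <= 1 :> R by rewrite invf_le1 // ler1n.
have hn0 : 0 < j.2.+1%:R^-1 :> R by rewrite invr_gt0.
exists m, e, (j.2.+1%:R^-1 / (3 * m%:R + 3)); split => //; split => //.
split; first by rewrite divr_gt0.
split.
- rewrite ler_pdivrMr // mul1r; apply: (le_trans hn1); have := ler0n R m; lra.
- by rewrite mulrCA ger_pMr // ler_pdivrMr // mul1r lerDl.
Qed.

Lemma near_identity_of_close j m e (eta : R) a b : orthonormal ip m e ->
  (forall z, z \in j.1 -> finop ip m e e z = z) ->
  0 < eta -> eta <= 1 -> 3 * m%:R * eta <= j.2.+1%:R^-1 ->
  (forall k, (k < m)%N -> hn (a k - e k) <= eta) ->
  (forall k, (k < m)%N -> hn (b k - e k) <= eta) ->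
  near_identity j (finop ip m a b).
Proof.
move=> he hZ e0 e1 e2 ha hb; have e0' := ltW e0.
have hn1 : j.2.+1%:R^-1 <= 1 :> R by rewrite invf_le1 // ler1n.
have close c d z : (forall k, (k < m)%N -> hn (c k - e k) <= eta) ->
    (forall k, (k < m)%N -> hn (d k - e k) <= eta) -> z \in j.1 ->
    hn (finop ip m c d z - z) <= j.2.+1%:R^-1 * hn z.
  move=> hc hd hz; rewrite -{2}(hZ z hz).
  apply: (le_trans (finop_perturb he e0' e1 hc hd z)).
  by rewrite ler_wpM2r ?hnorm_ge0.
exists m, a, b; split => //.
split; last by split => z; apply: close.
move=> x; rewrite -(subrK (finop ip m e e x) (finop ip m a b x)).
apply: (le_trans (hnormD hip _ _)).
have := finop_perturb he e0' e1 ha hb x; have := bessel hip he x.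
have := hnorm_ge0 ip x.
have : 3 * m%:R * eta * hn x <= hn x.
  by rewrite -[leRHS]mul1r ler_wpM2r ?hnorm_ge0 ?(le_trans e2).
lra.
Qed.

End PerturbedProjections.

Lemma telescope3 (V : zmodType) (a b c d : V) : (a - b) + ((b - c) + (c - d)) = a - d.
Proof. by rewrite addrA [a - b + _]addrA subrK addrA subrK. Qed.

Section ApproximateIdentity.
Variables (R : realType) (H : lmodType R[i]) (ip : H -> H -> R[i]).
Hypothesis hip : is_inner_product ip.
Hypothesis hcomp : forall u : nat -> H, cauchy_seq ip u -> exists l, seq_converges_to ip u l.
Variables (U : set (H -> H)) (nU : (H -> H) -> R).
Hypothesis hU : is_normed_operator_ideal ip U nU.
Implicit Types (x z : H) (u w : nat -> H) (A : H -> H).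
Local Notation hn := (hnorm ip).
Local Notation finop := (finop ip).

Lemma U_finop m u w : U (finop m u w).
Proof.
have := U_sum hU m (F := fun i => tensor ip (u i) (w i)) (fun i => U_tensor hip hU _ _).
by congr U.
Qed.

Definition finop_bound (m : nat) u w : R := \sum_(i < m) hn (u i) * hn (w i).

Lemma nU_finop m u w : nU (finop m u w) <= finop_bound m u w.
Proof.
have := nU_sum hU m (F := fun i => tensor ip (u i) (w i)) (fun i => U_tensor hip hU _ _).
move/le_trans; apply.
by apply: ler_sum => i _; rewrite (nU_tensor hU).
Qed.

Lemma finop_dense A : U A -> forall eps : R, 0 < eps ->
  exists m u w, nU (fun x => A x - finop m u w x) < eps.
Proof.
move=> hA eps e0; have [F [[hFb [n [k [v [_ hv]]]]] hAF]] := nU_dense hU hA e0.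
have [Fs hFs] := adjoint_exists hip hcomp hFb.
have [m [u [w hF]]] := finite_rank_finop hip hFs hv.
by exists m, u, w; rewrite -hF.
Qed.

Lemma nU_add3 A1 A2 A3 : U A1 -> U A2 -> U A3 ->
  nU (fun x => A1 x + (A2 x + A3 x)) <= nU A1 + nU A2 + nU A3.
Proof.
move=> h1 h2 h3; apply: (le_trans (nUD hU h1 (UD hU h2 h3))).
by rewrite -addrA lerD2l; apply: (nUD hU).
Qed.

Lemma left_error A m u w mp av bv (eta : R) : U A -> 0 <= eta ->
  (forall x, hn (finop mp av bv x) <= 2 * hn x) ->
  (forall i, (i < m)%N -> hn (finop mp av bv (u i) - u i) <= eta * hn (u i)) ->
  nU (fun x => finop mp av bv (A x) - A x) <=
    3 * nU (fun x => A x - finop m u w x) + eta * finop_bound m u w.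
Proof.
move=> hA eta0 hP2 hPu; set P := finop mp av bv; set F := finop m u w.
have hX : U (fun x => A x - F x) := UB hU hA (U_finop m u w).
have [Xs hXs] := adjoint_exists hip hcomp (U_bounded hU hX).
have PL : linear_op P := finop_linear hip mp av bv.
have -> : (fun x => P (A x) - A x) =
    (fun x => P (A x - F x) + ((P (F x) - F x) + (F x - A x))).
  by apply: funext => x; rewrite (linB PL) telescope3.
have PF : (fun x => P (F x) - F x) = finop m (fun i => P (u i) - u i) w.
  apply: funext => x; rewrite /F /finop (lin_sum PL) -sumrB.
  by apply: eq_bigr => i _; rewrite (linZ PL) scalerBr.
have U1 : U (fun x => P (A x - F x)).
  by rewrite /P (finop_compr mp av bv hXs); apply: U_finop.
have U2 : U (fun x => P (F x) - F x) by rewrite PF; apply: U_finop.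
apply: (le_trans (nU_add3 U1 U2 (UB hU (U_finop m u w) hA))).
rewrite (nUB hU (U_finop m u w) hA).
have n1 : nU (fun x => P (A x - F x)) <= 2 * nU (fun x => A x - F x).
  by apply: (nU_left hip hU) => //; apply: (U_bounded hU); apply: U_finop.
have n2 : nU (fun x => P (F x) - F x) <= eta * finop_bound m u w.
  rewrite PF; apply: (le_trans (nU_finop _ _ _)); rewrite /finop_bound mulr_sumr.
  apply: ler_sum => i _; rewrite mulrA ler_wpM2r ?hnorm_ge0 //; exact: hPu.
lra.
Qed.

Lemma right_error A m u w mp av bv (eta : R) : U A -> 0 <= eta ->
  (forall x, hn (finop mp av bv x) <= 2 * hn x) ->
  (forall i, (i < m)%N -> hn (finop mp bv av (w i) - w i) <= eta * hn (w i)) ->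
  nU (fun x => A (finop mp av bv x) - A x) <=
    3 * nU (fun x => A x - finop m u w x) + eta * finop_bound m u w.
Proof.
move=> hA eta0 hP2 hPw; set P := finop mp av bv; set F := finop m u w.
have hX : U (fun x => A x - F x) := UB hU hA (U_finop m u w).
have -> : (fun x => A (P x) - A x) =
    (fun x => (A (P x) - F (P x)) + ((F (P x) - F x) + (F x - A x))).
  by apply: funext => x; rewrite telescope3.
have FP : (fun x => F (P x) - F x) = finop m u (fun i => finop mp bv av (w i) - w i).
  apply: funext => x.
  rewrite /P /F (congr1 (fun f => f x) (finop_compr m u w (finop_adjoint hip mp av bv))).
  by rewrite /finop -sumrB; apply: eq_bigr => i _; rewrite (ipBr hip) scalerBl.
have U1 : U (fun x => A (P x) - F (P x)).
  have -> : (fun x => A (P x) - F (P x)) = finop mp (fun i => A (av i) - F (av i)) bv :=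
    finop_compl ip mp av bv (U_lin hU hX).
  exact: U_finop.
have U2 : U (fun x => F (P x) - F x) by rewrite FP; apply: U_finop.
apply: (le_trans (nU_add3 U1 U2 (UB hU (U_finop m u w) hA))).
rewrite (nUB hU (U_finop m u w) hA).
have n1 : nU (fun x => A (P x) - F (P x)) <= 2 * nU (fun x => A x - F x).
  by apply: (nU_right hip hU (A := P)) => //; apply: (U_bounded hU); apply: U_finop.
have n2 : nU (fun x => F (P x) - F x) <= eta * finop_bound m u w.
  rewrite FP; apply: (le_trans (nU_finop _ _ _)); rewrite /finop_bound mulr_sumr.
  apply: ler_sum => i _; rewrite mulrCA ler_wpM2l ?hnorm_ge0 //; exact: hPw.
lra.
Qed.

Definition stage_le (j1 j2 : seq H * nat) : Prop :=
  {subset j1.1 <= j2.1} /\ (j1.2 <= j2.2)%N.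

Lemma stage_directed : directed stage_le.
Proof.
split.
- exact: (inhabits ([::], 0%N)).
- by move=> j; split.
- move=> j1 j2 j3 [a1 b1] [a2 b2]; split; last exact: leq_trans b1 b2.
  by move=> z hz; apply/a2/a1.
- move=> j1 j2; exists (j1.1 ++ j2.1, maxn j1.2 j2.2); do 2 split => /=.
  + by move=> z hz; rewrite mem_cat hz.
  + exact: leq_maxl.
  + by move=> z hz; rewrite mem_cat hz orbT.
  + exact: leq_maxr.
Qed.

(* A net of near identities at every stage is an approximate identity of U:
   approximate A by finop m u w and go beyond the stage containing all u i,
   w i with 1/(n+1) small against finop_bound m u w. *)
Lemma near_identity_net (P : seq H * nat -> H -> H) :
  (forall j, near_identity ip j (P j)) -> approx_identity U nU stage_le P.
Proof.
move=> hP; split; first by move=> j; have [mp [av [bv [-> _]]]] := hP j; apply: U_finop.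
move=> A hA eps e0; pose de := eps / 4.
have de0 : 0 < de by rewrite divr_gt0.
have [m [u [w hF]]] := finop_dense hA de0.
pose K := finop_bound m u w.
have K0 : 0 <= K by apply: sumr_ge0 => i _; rewrite mulr_ge0 ?hnorm_ge0.
have [N hN] := inv_succ_lt (divr_gt0 de0 (ltr_pwDr ltr01 K0) : 0 < de / (K + 1)).
exists ([seq u i | i <- iota 0 m] ++ [seq w i | i <- iota 0 m], N) => j [hsub hle].
have [mp [av [bv [-> [h2 [hz1 hz2]]]]]] := hP j.
have eta0 : 0 <= j.2.+1%:R^-1 :> R by rewrite invr_ge0 ler0n.
have etaK : j.2.+1%:R^-1 * K <= de.
  have := hN _ hle; rewrite ltr_pdivlMr ?ltr_pwDr // mulrDr mulr1.
  move: (j.2.+1%:R^-1) eta0 => eta eta0; lra.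
have in_stage i : (i < m)%N -> u i \in j.1 /\ w i \in j.1.
  have hi' : (i \in iota 0 m) = (i < m)%N by rewrite mem_iota.
  by move=> hi; split; apply: hsub; rewrite mem_cat map_f ?orbT ?hi'.
have small : 3 * nU (fun x => A x - finop m u w x) + j.2.+1%:R^-1 * K < eps.
  by rewrite [eps](_ : _ = 3 * de + de); [apply: ltr_leD; rewrite ?ltr_pM2l | rewrite /de; field].
split.
- apply: le_lt_trans (left_error _ hA eta0 h2 _) small.
  by move=> i hi; apply: hz1; case: (in_stage i hi).
- apply: le_lt_trans (right_error _ hA eta0 h2 _) small.
  by move=> i hi; apply: hz2; case: (in_stage i hi).
Qed.

End ApproximateIdentity.

Section ApproximateInvertibility.
Variables (R : realType) (H : lmodType R[i]) (ip : H -> H -> R[i]).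
Hypothesis hip : is_inner_product ip.
Hypothesis hcomp : forall u : nat -> H, cauchy_seq ip u -> exists l, seq_converges_to ip u l.
Variables (U : set (H -> H)) (nU : (H -> H) -> R).
Hypothesis hU : is_normed_operator_ideal ip U nU.
Variable T : H -> H.
Hypothesis hT : U T.
Implicit Types (x y : H).
Local Notation hn := (hnorm ip).

(* Testing T R_j - 1 against y (x) y gives  nU ((T R_j y - y) (x) y) -> 0. *)
Lemma dense_range_of_approx_right_invertible :
  approx_right_invertible U nU T -> dense_range ip T.
Proof.
move=> [I [le [Rj [[_ le_refl _ _] [_ [hTR hai]]]]]] y eps e0.
have [->|yn] := eqVneq y 0; first by exists 0; rewrite (lin0 (U_lin hU hT)) subr0 (hnorm0 hip).
have hy := hnorm_gt0 hip yn.
have [j0 /(_ j0 (le_refl j0)) [h1 _]] := hai _ (U_tensor hip hU y y) _ (mulr_gt0 e0 hy).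
exists (Rj j0 y); move: h1.
have -> : (fun x => T (Rj j0 (tensor ip y y x)) - tensor ip y y x) =
    tensor ip (T (Rj j0 y) - y) y.
  by apply: funext => x; rewrite /tensor scalerBr (linZ (U_lin hU (hTR j0))).
by rewrite (nU_tensor hU) ltr_pM2r.
Qed.

(* If T x = 0 then  L_j T (x (x) x) - x (x) x = -(x (x) x)  has fixed norm |x|^2. *)
Lemma trivial_kernel_of_approx_left_invertible :
  approx_left_invertible U nU T -> trivial_kernel T.
Proof.
move=> [I [le [Lj [[_ le_refl _ _] [hL [_ hai]]]]]] x hx.
apply/eqP/contraT => xn.
have hpos := hnorm_gt0 hip xn.
have [j0 /(_ j0 (le_refl j0)) [h1 _]] := hai _ (U_tensor hip hU x x) _ (mulr_gt0 hpos hpos).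
move: h1; have -> : (fun h => Lj j0 (T (tensor ip x x h)) - tensor ip x x h) =
    tensor ip (- x) x.
  apply: funext => h; rewrite /tensor (linZ (U_lin hU hT)) hx scaler0.
  by rewrite (lin0 (U_lin hU (hL j0))) sub0r scalerN.
by rewrite (nU_tensor hU) (hnormN hip) ltxx.
Qed.

(* Dense range: pick x k with T x k close to an orthonormal basis e k of the
   stage; R_j = sum x k (x) e k makes T R_j = sum T x k (x) e k a near
   identity. *)
Lemma approx_right_invertible_of_dense_range :
  dense_range ip T -> approx_right_invertible U nU T.
Proof.
move=> hd.
have near j : exists Rj, U Rj /\ near_identity ip j (fun x => T (Rj x)).
  have [m [e [eta [he [hZ [e0 [e1 e2]]]]]]] := stage_basis hip j.
  have [xk hxk] := choice (fun k => hd (e k) eta e0).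
  exists (finop ip m xk e); split; first exact: (U_finop hip hU).
  rewrite (finop_compl ip m xk e (U_lin hU hT)).
  apply: (near_identity_of_close hip he hZ e0 e1 e2) => k hk; first exact: ltW.
  by rewrite subrr (hnorm0 hip) ltW.
have [Rj hRj] := choice near.
exists (seq H * nat)%type, (@stage_le R H), Rj; split; first exact: stage_directed.
by split; [move=> j; case: (hRj j) | apply: (near_identity_net hip hcomp hU) => j; case: (hRj j)].
Qed.

(* Trivial kernel: the adjoint Ts has dense range; with Ts g k close to e k,
   L_j = sum e k (x) g k makes L_j T = sum e k (x) Ts g k a near identity. *)
Lemma approx_left_invertible_of_trivial_kernel :
  trivial_kernel T -> approx_left_invertible U nU T.
Proof.
move=> hker; have [Ts hTs] := adjoint_exists hip hcomp (U_bounded hU hT).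
have hd := adjoint_dense_range hip hcomp hTs hker.
have near j : exists Lj, U Lj /\ near_identity ip j (fun x => Lj (T x)).
  have [m [e [eta [he [hZ [e0 [e1 e2]]]]]]] := stage_basis hip j.
  have [gk hgk] := choice (fun k => hd (e k) eta e0).
  exists (finop ip m e gk); split; first exact: (U_finop hip hU).
  rewrite (finop_compr m e gk hTs).
  apply: (near_identity_of_close hip he hZ e0 e1 e2) => k hk; last exact: ltW.
  by rewrite subrr (hnorm0 hip) ltW.
have [Lj hLj] := choice near.
exists (seq H * nat)%type, (@stage_le R H), Lj; split; first exact: stage_directed.
by split; [move=> j; case: (hLj j) | apply: (near_identity_net hip hcomp hU) => j; case: (hLj j)].
Qed.

End ApproximateInvertibility.

Theorem theorem4p10 (R : realType) (H : lmodType R[i]) (ip : H -> H -> R[i])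
    (U : set (H -> H)) (nU : (H -> H) -> R) (T : H -> H) :
  is_inf_dim_separable_hilbert ip ->
  is_normed_operator_ideal ip U nU ->
  U T ->
  (approx_right_invertible U nU T <-> dense_range ip T) /\
  (approx_left_invertible U nU T <-> trivial_kernel T).
Proof.
move=> [hip hcomp _ _] hU hT; split; split.
- exact: (dense_range_of_approx_right_invertible hip hU hT).
- exact: (approx_right_invertible_of_dense_range hip hcomp hU hT).
- exact: (trivial_kernel_of_approx_left_invertible hip hU hT).
- exact: (approx_left_invertible_of_trivial_kernel hip hcomp hU hT).
Qed.
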